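(* Let $(R,\mathfrak{m})$ be a commutative Artinian local ring with identity, $\mathfrak{m}\neq0$ and $\mathfrak{m}^2=0$. For every integer $n\ge6$, $|R|>4$ if and only if $n-3\in L(x^n)$.
   Context: A nonunit polynomial in $R[x]$ is irreducible if in any factorization into two polynomials one factor is a unit of $R[x]$. A positive integer $k$ is a length of $f$ if $f$ is a product of $k$ irreducible polynomials of $R[x]$; $L(f)$ denotes the set of lengths of $f$. (Since $\mathfrak m\ne 0$, $|R|\ge 4$.) *)

From HB Require Import structures.
From mathcomp Require Import all_boot all_order all_algebra.
Set Implicit Arguments. Unset Strict Implicit. Unset Printing Implicit Defensive.
Import GRing.Theory.
Local Open Scope ring_scope.

Definition is_ideal (R : comNzRingType) (I : R -> Prop) : Prop :=
  [/\ I 0, (forall x y, I x -> I y -> I (x + y)) & (forall r x, I x -> I (r * x))].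

Definition artinian (R : comNzRingType) : Prop :=
  forall I : nat -> R -> Prop,
    (forall n, is_ideal (I n)) ->
    (forall n x, I n.+1 x -> I n x) ->
    exists N, forall n, (N <= n)%N -> forall x, I n x <-> I N x.

(* Local ring: the nonunits are closed under addition (hence form the unique
   maximal ideal m). *)
Definition local_ring (R : comUnitRingType) : Prop :=
  forall x y : R, x \isn't a GRing.unit -> y \isn't a GRing.unit ->
    (x + y) \isn't a GRing.unit.

Definition poly_unit (R : comNzRingType) (p : {poly R}) : Prop :=
  exists q : {poly R}, p * q = 1.

Definition poly_irreducible (R : comNzRingType) (f : {poly R}) : Prop :=
  ~ poly_unit f /\
  forall g h : {poly R}, f = g * h -> poly_unit g \/ poly_unit h.

Definition is_length (R : comNzRingType) (f : {poly R}) (k : nat) : Prop :=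
  (0 < k)%N /\
  exists s : seq {poly R},
    size s = k /\ (forall g, g \in s -> poly_irreducible g) /\
    f = \prod_(g <- s) g.

From Pilot Require Import Defs.
From HB Require Import structures.
From mathcomp Require Import all_boot all_order all_algebra.
From mathcomp Require Import ring zify.
From Stdlib Require Import Classical.
Set Implicit Arguments. Unset Strict Implicit. Unset Printing Implicit Defensive.
Import GRing.Theory.
Local Open Scope ring_scope.

(* Let m be the maximal ideal, i.e. the set of non-units. Degree and order of
   residues in (R/m)[x] are additive, so every factor f of X^n has residue a
   unit monomial: f = u X^t + g with u a unit and g in m[x]. As m^2 = 0, a
   polynomial whose residue is a nonzero constant is a unit, and X and
   X^2 + c (0 <> c in m) are irreducible.
   If m has two nonzero elements, it has nonzero c1, c2, c3 with
   c1 + c2 + c3 = 0, and then (X^2 + c1)(X^2 + c2)(X^2 + c3) = X^6, so n - 3 is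
   a length of X^n. Otherwise m = {0, c}, so |R| = 4, c + c = 0 and units fix
   m pointwise. For M the largest residue degree of the factors, the
   coefficient of X^(n - M) in the product of the u X^t + g is c times the
   number of factors of residue degree M, whence that number is even; but for
   n - 3 factors of total residue degree n it must be 1 or 3. *)

Lemma sum_excess3_bigmax (T : eqType) (s : seq T) (F : T -> nat) :
  {in s, forall x, 0 < F x}%N -> (\sum_(x <- s) F x = size s + 3)%N ->
  exists M, [/\ (2 <= M <= \sum_(x <- s) F x)%N, {in s, forall x, F x <= M}%N
    & odd (count (fun x => F x == M) s)].
Proof.
move=> F_gt0 sumF.
have [x0 x0s] : exists x0, x0 \in s.
  case: s F_gt0 sumF => [|x s] _; first by rewrite big_nil.
  by exists x; exact: mem_head.
set M := (\max_(x <- s) F x)%N.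
have F_leM : {in s, forall x, F x <= M}%N by move=> x xs; exact: leq_bigmax_seq.
set cnt := count (fun x => F x == M) s; set cntn := count (fun x => F x != M) s.
set S := (\sum_(x <- s | F x != M) F x)%N.
have sumE : (\sum_(x <- s) F x = M * cnt + S)%N.
  rewrite (bigID (fun x => F x == M)) /= (eq_bigr (fun=> M)); last by move=> x /eqP.
  by rewrite big_const_seq iter_addn_0 mulnC.
have sizeE : size s = (cnt + cntn)%N by rewrite -(count_predC (fun x => F x == M)).
have S_ge : (cntn <= S)%N.
  rewrite /cntn /S -sum1_count big_seq_cond [X in (_ <= X)%N]big_seq_cond.
  by apply: leq_sum => x /andP[xs _]; exact: F_gt0.
have S_le : (S <= M.-1 * cntn)%N.
  rewrite /cntn /S -sum1_count big_distrr /= muln1 big_seq_cond [X in (_ <= X)%N]big_seq_cond.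
  by apply: leq_sum => x /andP[xs FxM]; have := F_leM x xs; lia.
have cnt_gt0 : (0 < cnt)%N.
  rewrite -has_count; apply/negPn/negP => /hasPn F_neqM.
  have : (M <= M.-1)%N.
    by apply/bigmax_leqP_seq => x xs _; have := F_leM x xs; have := F_neqM x xs; lia.
  have := F_gt0 x0 x0s; have := F_leM x0 x0s; lia.
have M_le : (M <= \sum_(x <- s) F x)%N.
  by apply/bigmax_leqP_seq => x xs _; rewrite (big_rem x xs) leq_addr.
have [M_ge2 cnt13] : (2 <= M)%N /\ (cnt = 1 \/ cnt = 3)%N.
  move: sumF S_le; rewrite sumE sizeE.
  by case: (ltngtP M 2) => [lt2|gt2|->]; nia.
exists M; split => //; first by rewrite M_ge2 M_le.
by rewrite -/cnt; case: cnt13 => ->.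
Qed.

Section UnitCoefficients.
Variable R : comUnitRingType.
Implicit Types (u x : R) (p q : {poly R}).

Lemma nonunitMl x y : x \isn't a GRing.unit -> y * x \isn't a GRing.unit.
Proof. by move=> xN; rewrite unitrM negb_and xN orbT. Qed.

Lemma nonunitMr x y : x \isn't a GRing.unit -> x * y \isn't a GRing.unit.
Proof. by move=> xN; rewrite unitrM negb_and xN. Qed.

Lemma nonunit_neq_unit x y : x \isn't a GRing.unit -> y \is a GRing.unit -> x != y.
Proof. by move=> xN yU; apply: contraNneq xN => ->. Qed.

Definition nonunit_coefs p := forall i, p`_i \isn't a GRing.unit.

(* [unit_deg p i] and [unit_ord p i] say that the residue of [p] in (R/m)[x],
   m being the set of non-units, has degree resp. order [i]. When [p] has no
   unit coefficient, [udeg p] is [0]. *)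
Definition unit_deg p i :=
  p`_i \is a GRing.unit /\ forall j, (i < j)%N -> p`_j \isn't a GRing.unit.

Definition unit_ord p i :=
  p`_i \is a GRing.unit /\ forall j, (j < i)%N -> p`_j \isn't a GRing.unit.

Definition udeg p : nat := \max_(i < size p | p`_i \is a GRing.unit) (i : nat).

Definition uord p := find (fun a : R => a \is a GRing.unit) p.

Lemma unit_deg_uniq p i j : unit_deg p i -> unit_deg p j -> i = j.
Proof.
move=> [pi_unit pi_top] [pj_unit pj_top].
by case: (ltngtP i j) => // [/pi_top | /pj_top]; rewrite ?pi_unit ?pj_unit.
Qed.

Lemma unit_ord_uniq p i j : unit_ord p i -> unit_ord p j -> i = j.
Proof.
move=> [pi_unit pi_bot] [pj_unit pj_bot].
by case: (ltngtP i j) => // [/pj_bot | /pi_bot]; rewrite ?pi_unit ?pj_unit.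
Qed.

Lemma unit_ord_leq_deg p i j : unit_ord p i -> unit_deg p j -> (i <= j)%N.
Proof. by move=> [_ p_bot] [pj_unit _]; rewrite leqNgt; apply: contraTN pj_unit => /p_bot. Qed.

Lemma unit_coef_lt_size p i : p`_i \is a GRing.unit -> (i < size p)%N.
Proof. by rewrite ltnNge; apply: contraTN => /(nth_default 0) ->; rewrite unitr0. Qed.

Lemma has_unit_coef p : ~ nonunit_coefs p -> exists i, p`_i \is a GRing.unit.
Proof. by move=> pU; apply: NNPP => noU; apply: pU => i; apply/negP => iU; apply: noU; exists i. Qed.

Lemma udeg_eq p i : unit_deg p i -> udeg p = i.
Proof.
move=> [pi_unit pi_top]; apply/eqP; rewrite eqn_leq; apply/andP; split.
  by apply/bigmax_leqP => j /= pj_unit; rewrite leqNgt; apply: contraTN pj_unit => /pi_top.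
exact: (leq_bigmax_cond (Ordinal (unit_coef_lt_size pi_unit))).
Qed.

Lemma unit_deg_udeg p : ~ nonunit_coefs p -> unit_deg p (udeg p).
Proof.
move=> /has_unit_coef pU.
have pU_size i : p`_i \is a GRing.unit -> (i <= size p)%N.
  by move=> /unit_coef_lt_size /ltnW.
have [i pi_unit i_max] := ex_maxnP pU pU_size.
have pi : unit_deg p i.
  by split=> // j ij; apply/negP => /i_max; rewrite leqNgt ij.
by rewrite (udeg_eq pi).
Qed.

Lemma unit_ord_uord p : ~ nonunit_coefs p -> unit_ord p (uord p).
Proof.
move=> /has_unit_coef [i pi_unit].
have p_has : has (fun a : R => a \is a GRing.unit) p.
  by apply/(has_nthP 0); exists i; first exact: unit_coef_lt_size.
by split=> [|j /(before_find 0) /negbT]; first exact: nth_find.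
Qed.

Lemma unit_degXn n : unit_deg ('X^n : {poly R}) n.
Proof. by split=> [|j /gtn_eqF]; rewrite coefXn ?eqxx ?unitr1 // => ->; rewrite unitr0. Qed.

Lemma unit_ordXn n : unit_ord ('X^n : {poly R}) n.
Proof. by split=> [|j /ltn_eqF]; rewrite coefXn ?eqxx ?unitr1 // => ->; rewrite unitr0. Qed.

Definition ucoef p := p`_(udeg p).

Definition urest p := p - (ucoef p)%:P * 'X^(udeg p).

Lemma urestE p : p = (ucoef p)%:P * 'X^(udeg p) + urest p.
Proof. by rewrite /urest addrC subrK. Qed.

Lemma urest_nonunit_coefs p t : unit_deg p t -> unit_ord p t -> nonunit_coefs (urest p).
Proof.
move=> pt pt' j; rewrite /urest /ucoef (udeg_eq pt) coefB coefCM coefXn.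
case: (ltngtP j t) => [jt|tj|->]; rewrite ?mulr0 ?subr0 ?mulr1 ?subrr ?unitr0 //.
  by case: pt' => _; apply.
by case: pt => _; apply.
Qed.

Section LocalRing.
Hypothesis hloc : local_ring R.

Lemma unitrD_nonunit u x :
  u \is a GRing.unit -> x \isn't a GRing.unit -> u + x \is a GRing.unit.
Proof.
move=> uU xN; apply: contraTT uU => uxN.
by rewrite -(addrK x u); apply: hloc; rewrite ?unitrN.
Qed.

Lemma uniq_two_nonunits c x :
  c \isn't a GRing.unit -> x \isn't a GRing.unit -> c != 0 -> x != 0 -> x != c ->
  uniq [:: 0; c; x; 1; 1 + c].
Proof.
move=> cN xN c_neq0 x_neq0 xc.
have [zN oneU] : (0 : R) \isn't a GRing.unit /\ (1 : R) \is a GRing.unit by rewrite unitr0 unitr1.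
have c1U : 1 + c \is a GRing.unit by exact: unitrD_nonunit.
have one_c : (1 == 1 + c) = false.
  by apply/negbTE; rewrite -[X in X == _]addr0 (inj_eq (addrI 1)) eq_sym.
rewrite /= !inE !negb_or !andbT one_c (eq_sym 0 c) (eq_sym 0 x) c_neq0 x_neq0 (eq_sym c x) xc.
by rewrite !nonunit_neq_unit.
Qed.

Lemma nonunit_sum (I : Type) (r : seq I) (P : pred I) (F : I -> R) :
  (forall i, P i -> F i \isn't a GRing.unit) ->
  \sum_(i <- r | P i) F i \isn't a GRing.unit.
Proof. by move=> FN; elim/big_ind: _ => //; rewrite unitr0. Qed.

Lemma coefM_nonunit p q l :
  (forall j, (j <= l)%N -> p`_j \isn't a GRing.unit \/ q`_(l - j) \isn't a GRing.unit) ->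
  (p * q)`_l \isn't a GRing.unit.
Proof.
move=> pqN; rewrite coefM; apply: nonunit_sum => j _.
by case: (pqN j (leq_ord j)) => [/nonunitMr -> | /nonunitMl ->].
Qed.

Lemma coefM_unit p q i k :
  p`_i \is a GRing.unit -> q`_k \is a GRing.unit ->
  (forall j, (j <= i + k)%N -> j != i ->
     p`_j \isn't a GRing.unit \/ q`_(i + k - j) \isn't a GRing.unit) ->
  (p * q)`_(i + k) \is a GRing.unit.
Proof.
move=> piU qkU pqN; rewrite coefM (bigD1 (Ordinal (ltn_addr k (ltnSn i)))) //= addKn.
apply: unitrD_nonunit; first by rewrite unitrM piU qkU.
apply: nonunit_sum => j ji.
have {}ji : (j : nat) != i by apply: contraNneq ji => eji; exact/eqP/val_inj.
by case: (pqN j (leq_ord j) ji) => [/nonunitMr -> | /nonunitMl ->].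
Qed.

Lemma nonunit_coefsXnM k p : nonunit_coefs p -> nonunit_coefs ('X^k * p).
Proof. by move=> pN i; rewrite coefXnM; case: ifP; rewrite ?unitr0. Qed.

Lemma nonunit_coefs_sum (I : eqType) (r : seq I) (F : I -> {poly R}) :
  {in r, forall i, nonunit_coefs (F i)} -> nonunit_coefs (\sum_(i <- r) F i).
Proof. by move=> FN j; rewrite coef_sum big_seq; apply: nonunit_sum => i /FN. Qed.

Lemma unit_degM p q i k : unit_deg p i -> unit_deg q k -> unit_deg (p * q) (i + k).
Proof.
move=> [piU p_top] [qkU q_top]; split.
  apply: coefM_unit => // j j_le.
  case: (ltngtP i j) => [/p_top pjN _|ji _|->]; [by left | | by []].
  by right; apply: q_top; lia.
move=> l l_gt; apply: coefM_nonunit => j j_le.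
by case: (ltnP i j) => [/p_top|ij]; [left | right; apply: q_top; lia].
Qed.

Lemma unit_ordM p q i k : unit_ord p i -> unit_ord q k -> unit_ord (p * q) (i + k).
Proof.
move=> [piU p_bot] [qkU q_bot]; split.
  apply: coefM_unit => // j j_le.
  case: (ltngtP i j) => [ij _|/p_bot pjN _|->]; [| by left | by []].
  by right; apply: q_bot; lia.
move=> l l_lt; apply: coefM_nonunit => j j_le.
by case: (ltnP j i) => [/p_bot|ij]; [left | right; apply: q_bot; lia].
Qed.

Lemma factor_unit_coefs f g h :
  f = g * h -> ~ nonunit_coefs f -> ~ nonunit_coefs g /\ ~ nonunit_coefs h.
Proof. by move=> -> fU; split=> pN; apply: fU => i; apply: coefM_nonunit => j _; [left | right]. Qed.

Lemma unit_deg_factor f g h t : f = g * h -> unit_deg f t ->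
  exists i k, [/\ unit_deg g i, unit_deg h k & t = (i + k)%N].
Proof.
move=> fgh ft; have fU : ~ nonunit_coefs f by case: ft => ftU _ /(_ t); rewrite ftU.
have [/unit_deg_udeg gi /unit_deg_udeg hk] := factor_unit_coefs fgh fU.
exists (udeg g), (udeg h); split=> //; apply: unit_deg_uniq ft _.
by rewrite fgh; exact: unit_degM.
Qed.

Lemma unit_ord_factor f g h t : f = g * h -> unit_ord f t ->
  exists i k, [/\ unit_ord g i, unit_ord h k & t = (i + k)%N].
Proof.
move=> fgh ft; have fU : ~ nonunit_coefs f by case: ft => ftU _ /(_ t); rewrite ftU.
have [/unit_ord_uord gi /unit_ord_uord hk] := factor_unit_coefs fgh fU.
exists (uord g), (uord h); split=> //; apply: unit_ord_uniq ft _.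
by rewrite fgh; exact: unit_ordM.
Qed.

Lemma poly_unit_deg0 q : Defs.poly_unit q -> unit_deg q 0.
Proof.
move=> [r qr]; have := unit_degXn 0; rewrite expr0 -qr.
case/(unit_deg_factor erefl) => i [k [qi _ /esym/eqP]].
by rewrite addn_eq0 => /andP[/eqP <-].
Qed.

Lemma unit_deg_gt0_nonunit f t : unit_deg f t -> (0 < t)%N -> ~ Defs.poly_unit f.
Proof. by move=> ft t_gt0 /poly_unit_deg0 f0; rewrite (unit_deg_uniq ft f0) in t_gt0. Qed.

Lemma unit_deg_prod (s : seq {poly R}) :
  {in s, forall f, unit_deg f (udeg f)} ->
  unit_deg (\prod_(f <- s) f) (\sum_(f <- s) udeg f).
Proof.
rewrite big_seq [X in unit_deg _ X]big_seq => s_deg.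
elim/big_rec2: _ => [|f d p f_in pd]; last exact: unit_degM (s_deg f f_in) pd.
by have := unit_degXn 0; rewrite expr0.
Qed.

Lemma unit_ord_prod (s : seq {poly R}) :
  {in s, forall f, unit_ord f (uord f)} ->
  unit_ord (\prod_(f <- s) f) (\sum_(f <- s) uord f).
Proof.
rewrite big_seq [X in unit_ord _ X]big_seq => s_ord.
elim/big_rec2: _ => [|f d p f_in pd]; last exact: unit_ordM (s_ord f f_in) pd.
by have := unit_ordXn 0; rewrite expr0.
Qed.

Lemma Xn_factors_monomial n (s : seq {poly R}) : 'X^n = \prod_(f <- s) f ->
  {in s, forall f, unit_deg f (udeg f) /\ unit_ord f (udeg f)} /\
  \sum_(f <- s) udeg f = n.
Proof.
move=> Xn_prod.
have Xn_unit : ~ nonunit_coefs ('X^n : {poly R}).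
  by case: (unit_degXn n) => XnU _ /(_ n); rewrite XnU.
have s_unit : {in s, forall f, ~ nonunit_coefs f}.
  by move=> f f_in; have [] := factor_unit_coefs (etrans Xn_prod (big_rem f f_in)) Xn_unit.
have s_deg : {in s, forall f, unit_deg f (udeg f)} by move=> f /s_unit /unit_deg_udeg.
have s_ord : {in s, forall f, unit_ord f (uord f)} by move=> f /s_unit /unit_ord_uord.
have deg_sum : \sum_(f <- s) udeg f = n.
  by apply: unit_deg_uniq (unit_deg_prod s_deg) _; rewrite -Xn_prod; exact: unit_degXn.
have ord_sum : \sum_(f <- s) uord f = n.
  by apply: unit_ord_uniq (unit_ord_prod s_ord) _; rewrite -Xn_prod; exact: unit_ordXn.
have ord_le : {in s, forall f, uord f <= udeg f}%N.
  by move=> f f_in; exact: unit_ord_leq_deg (s_ord f f_in) (s_deg f f_in).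
have : (\sum_(f <- s) (udeg f - uord f) == 0)%N.
  by rewrite big_seq sumnB // -!big_seq deg_sum ord_sum subnn.
rewrite sum_nat_seq_eq0 => /allP ord_eq; split=> // f f_in; split; first exact: s_deg.
have ord_deg : uord f = udeg f.
  by apply/eqP; rewrite eqn_leq ord_le // -subn_eq0; exact: ord_eq.
by rewrite -ord_deg; exact: s_ord.
Qed.

Lemma irreducible_coef0_neq0 f t :
  poly_irreducible f -> unit_deg f t -> (1 < t)%N -> f`_0 != 0.
Proof.
move=> [_ f_irr] [ftU _] t_gt1; apply/eqP => f0.
have fE : f = drop_poly 1 f * 'X.
  rewrite -{1}(poly_take_drop 1 f) expr1 -[RHS]add0r; congr (_ + _).
  by apply/polyP => -[|i]; rewrite coef_take_poly coef0 // f0.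
case: (f_irr _ _ fE) => [/poly_unit_deg0 [_ d_top] | ]; last first.
  exact: unit_deg_gt0_nonunit (unit_degXn 1) _.
by move: (d_top t.-1 ltac:(lia)); rewrite coef_drop_poly addn1 prednK ?ftU //; lia.
Qed.

Section SquareZero.
Hypothesis hsq :
  forall x y : R, x \isn't a GRing.unit -> y \isn't a GRing.unit -> x * y = 0.

Lemma nonunit_coefsM0 p q : nonunit_coefs p -> nonunit_coefs q -> p * q = 0.
Proof. by move=> pN qN; apply/polyP => i; rewrite coefM coef0 big1 // => j _; exact: hsq. Qed.

Lemma unit_deg0_poly_unit p : unit_deg p 0 -> Defs.poly_unit p.
Proof.
move=> [p0U p_top].
have gN : nonunit_coefs (p - (p`_0)%:P).
  by case=> [|i]; rewrite coefB coefC /= ?subrr ?unitr0 // subr0; exact: p_top.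
have uV : (p`_0)%:P * (p`_0)^-1%:P = 1 :> {poly R} by rewrite -polyCM mulrV.
exists ((p`_0)^-1%:P * (1 - (p`_0)^-1%:P * (p - (p`_0)%:P))).
move: uV (nonunit_coefsM0 gN gN); move: (p`_0)%:P (p`_0)^-1%:P => u v uv gg.
(* [p = u + g] with [g ^+ 2 = 0], so [u^-1 (1 - u^-1 g)] inverts [p]. *)
transitivity (u * v * (1 - v * (p - u)) + v * (p - u) - v ^+ 2 * ((p - u) * (p - u))).
  by ring.
by rewrite uv gg; ring.
Qed.

Lemma irreducible_udeg_gt0 f t : poly_irreducible f -> unit_deg f t -> (0 < t)%N.
Proof.
move=> [fN _] ft; rewrite lt0n; apply/negP => /eqP t0.
by apply: fN; apply: unit_deg0_poly_unit; rewrite -t0.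
Qed.

Lemma poly_irreducibleX : poly_irreducible ('X : {poly R}).
Proof.
have X1 : unit_deg ('X : {poly R}) 1 := unit_degXn 1.
split; first exact: unit_deg_gt0_nonunit X1 _.
move=> g h /unit_deg_factor /(_ X1) [[|i] [k [gi hk ik]]].
  by left; exact: unit_deg0_poly_unit.
by right; apply: unit_deg0_poly_unit; have <- : k = 0%N by lia.
Qed.

Lemma poly_irreducibleX2C c :
  c \isn't a GRing.unit -> c != 0 -> poly_irreducible ('X^2 + c%:P : {poly R}).
Proof.
move=> cN c_neq0; set f := 'X^2 + c%:P.
have fE j : f`_j = if j == 2%N then 1 else if j == 0%N then c else 0.
  by rewrite coefD coefXn coefC; case: j => [|[|[|j]]]; rewrite /= ?addr0 ?add0r.
have f_deg : unit_deg f 2.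
  by split=> [|j]; rewrite fE ?unitr1 //; case: j => [|[|[|j]]] //= _; rewrite unitr0.
have f_ord : unit_ord f 2.
  by split=> [|j]; rewrite fE ?unitr1 //; case: j => [|[|j]] //= _; rewrite unitr0.
split; first exact: unit_deg_gt0_nonunit f_deg _.
move=> g h fgh.
have [i [k [gi hk ik]]] := unit_deg_factor fgh f_deg.
have [i' [k' [gi' hk' ik']]] := unit_ord_factor fgh f_ord.
have := unit_ord_leq_deg gi' gi; have := unit_ord_leq_deg hk' hk.
case: i gi ik => [|i] gi ik; first by left; exact: unit_deg0_poly_unit.
case: k hk ik => [|k] hk ik; first by right; exact: unit_deg0_poly_unit.
move=> k'_le i'_le; exfalso.
have g0N : g`_0 \isn't a GRing.unit by case: gi' => _; apply; lia.
have h0N : h`_0 \isn't a GRing.unit by case: hk' => _; apply; lia.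
by move: (fE 0%N); rewrite fgh coef0M hsq //= => /eqP; rewrite eq_sym (negPf c_neq0).
Qed.

Lemma Xn_length_of_nonunits (c1 c2 c3 : R) n :
  c1 \isn't a GRing.unit -> c2 \isn't a GRing.unit -> c3 \isn't a GRing.unit ->
  c1 != 0 -> c2 != 0 -> c3 != 0 -> c1 + c2 + c3 = 0 -> (6 <= n)%N ->
  is_length ('X^n : {poly R}) (n - 3).
Proof.
move=> c1N c2N c3N c1_neq0 c2_neq0 c3_neq0 c_sum n_ge6; split; first lia.
exists ([:: 'X^2 + c1%:P; 'X^2 + c2%:P; 'X^2 + c3%:P] ++ nseq (n - 6) 'X).
split; first by rewrite size_cat size_nseq /=; lia.
split.
  move=> g; rewrite mem_cat => /orP[|/nseqP[-> _]]; last exact: poly_irreducibleX.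
  by rewrite !inE => /or3P[] /eqP ->; exact: poly_irreducibleX2C.
rewrite big_cat big_nseq iter_mulr_1 !big_cons big_nil /=.
rewrite -[in LHS](subnKC n_ge6) exprD; congr (_ * _).
have c12 : c1%:P * c2%:P = 0 :> {poly R} by rewrite -polyCM hsq.
have c13 : c1%:P * c3%:P = 0 :> {poly R} by rewrite -polyCM hsq.
have c23 : c2%:P * c3%:P = 0 :> {poly R} by rewrite -polyCM hsq.
have c123 : c1%:P + c2%:P + c3%:P = 0 :> {poly R} by rewrite -!polyCD c_sum.
transitivity ('X^6 + (c1%:P + c2%:P + c3%:P) * 'X^4
  + (c1%:P * c2%:P + c1%:P * c3%:P + c2%:P * c3%:P) * 'X^2 + c1%:P * c2%:P * c3%:P
  : {poly R}); last by ring.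
by rewrite c12 c13 c23 c123 mul0r; ring.
Qed.

Lemma Xn_length_of_two_nonunits (c x : R) n :
  c \isn't a GRing.unit -> x \isn't a GRing.unit -> c != 0 -> x != 0 -> x != c ->
  (6 <= n)%N -> is_length ('X^n : {poly R}) (n - 3).
Proof.
move=> cN xN c_neq0 x_neq0 xc n_ge6.
have [xc0 | xc_neq0] := eqVneq (x + c) 0.
  have cc_neq0 : c + c != 0.
    by apply: contraNneq xc => cc0; apply/eqP/(addIr c); rewrite xc0 cc0.
  apply: (@Xn_length_of_nonunits c c (- (c + c))) => //.
  - by rewrite unitrN hloc.
  - by rewrite oppr_eq0.
  - by rewrite subrr.
apply: (@Xn_length_of_nonunits x c (- (x + c))) => //.
- by rewrite unitrN hloc.
- by rewrite oppr_eq0.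
- by rewrite subrr.
Qed.

Section FourElementRing.
Variable c : R.
Hypotheses (c_nonunit : c \isn't a GRing.unit) (c_neq0 : c != 0).
Hypothesis nonunit_0c : forall x : R, x \isn't a GRing.unit -> x = 0 \/ x = c.

Lemma mulr_unit_nonunit u x : u \is a GRing.unit -> x \isn't a GRing.unit -> u * x = x.
Proof.
move=> uU /nonunit_0c [->|->]; first by rewrite mulr0.
case: (nonunit_0c (nonunitMl u c_nonunit)) => // uc0.
by move: c_neq0; rewrite -(mulKr uU c) uc0 mulr0 eqxx.
Qed.

Lemma add_self_eq0 : c + c = 0.
Proof.
case: (nonunit_0c (hloc c_nonunit c_nonunit)) => // cc.
by move: c_neq0; rewrite -(addrK c c) cc subrr eqxx.
Qed.

Lemma unit_subr1_nonunit (r : R) : r \is a GRing.unit -> r - 1 \isn't a GRing.unit.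
Proof.
move=> rU; apply/negP => r1U.
have := mulr_unit_nonunit r1U c_nonunit.
rewrite mulrBl mul1r (mulr_unit_nonunit rU c_nonunit) subrr => /eqP.
by rewrite eq_sym (negPf c_neq0).
Qed.

Lemma uniq_size_le4 (s : seq R) : uniq s -> (size s <= 4)%N.
Proof.
move=> s_uniq; suff /(uniq_leq_size s_uniq) : {subset s <= [:: 0; c; 1; 1 + c]} by [].
move=> r _; rewrite !inE.
have [rU | /nonunit_0c [->|->]] := boolP (r \is a GRing.unit); rewrite ?eqxx ?orbT //.
case: (nonunit_0c (unit_subr1_nonunit rU)) => /eqP.
  by rewrite subr_eq0 => ->; rewrite !orbT.
by rewrite subr_eq addrC => ->; rewrite !orbT.
Qed.

Lemma polyC_mul_nonunit_coefs u p :
  u \is a GRing.unit -> nonunit_coefs p -> u%:P * p = p.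
Proof. by move=> uU pN; apply/polyP => i; rewrite coefCM mulr_unit_nonunit. Qed.

Lemma prod_unit_monomial_add (I : eqType) (s : seq I) (u : I -> R) (t : I -> nat)
    (g : I -> {poly R}) :
  {in s, forall i, u i \is a GRing.unit /\ nonunit_coefs (g i)} ->
  \prod_(i <- s) ((u i)%:P * 'X^(t i) + g i) =
    (\prod_(i <- s) u i)%:P * 'X^(\sum_(i <- s) t i)
      + \sum_(i <- s) 'X^(\sum_(j <- s) t j - t i) * g i.
Proof.
elim: s => [|i s IH] s_split; first by rewrite !big_nil expr0 mulr1 addr0.
have [uiU giN] := s_split i (mem_head i s).
have {}s_split : {in s, forall j, u j \is a GRing.unit /\ nonunit_coefs (g j)}.
  by move=> j j_in; apply: s_split; rewrite inE j_in orbT.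
rewrite !big_cons {}IH // polyCM exprD.
set T := \sum_(j <- s) t j; set G := \sum_(j <- s) 'X^(T - t j) * g j.
have GN : nonunit_coefs G.
  by apply: nonunit_coefs_sum => j /s_split[_ gjN]; exact: nonunit_coefsXnM.
have -> : \sum_(j <- s) 'X^(t i + T - t j) * g j = 'X^(t i) * G.
  rewrite /G big_distrr /= !big_seq; apply: eq_bigr => j j_in.
  by rewrite mulrA -exprD addnBA // /T (big_rem j j_in) leq_addr.
rewrite addKn.
have uiG : (u i)%:P * ('X^(t i) * G) = 'X^(t i) * G.
  by apply: polyC_mul_nonunit_coefs; last exact: nonunit_coefsXnM.
have Ugi : (\prod_(j <- s) u j)%:P * ('X^T * g i) = 'X^T * g i.
  apply: polyC_mul_nonunit_coefs; last exact: nonunit_coefsXnM.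
  by apply: unitr_prod_in => j /s_split[].
have giG : g i * G = 0 by exact: nonunit_coefsM0.
transitivity ((u i)%:P * (\prod_(j <- s) u j)%:P * ('X^(t i) * 'X^T)
  + (u i)%:P * ('X^(t i) * G) + (\prod_(j <- s) u j)%:P * ('X^T * g i) + g i * G).
  by ring.
by rewrite uiG Ugi giG; ring.
Qed.

Lemma count_udeg_even n (s : seq {poly R}) M :
  'X^n = \prod_(f <- s) f -> {in s, forall f, poly_irreducible f} ->
  (2 <= M <= n)%N -> {in s, forall f, udeg f <= M}%N ->
  ~~ odd (count (fun f => udeg f == M) s).
Proof.
move=> Xn_prod s_irr /andP[M_ge2 M_le] s_leM.
have [s_mono s_sum] := Xn_factors_monomial Xn_prod.
have s_split : {in s, forall f, ucoef f \is a GRing.unit /\ nonunit_coefs (urest f)}.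
  by move=> f /s_mono[f_deg f_ord]; split; [case: f_deg | exact: urest_nonunit_coefs f_deg f_ord].
have coef_term : {in s, forall f, ('X^(n - udeg f) * urest f)`_(n - M) =
                                  if udeg f == M then c else 0}.
  move=> f f_in; have [f_deg f_ord] := s_mono f f_in.
  have f_le_n : (udeg f <= n)%N by rewrite -s_sum (big_rem f f_in) leq_addr.
  rewrite coefXnM; case: eqP => [fM | fM]; last by rewrite ifT //; have := s_leM f f_in; lia.
  have f_pos : (0 < udeg f)%N by lia.
  rewrite fM ltnn subnn /urest coefB coefCM coefXn eq_sym (gtn_eqF f_pos) mulr0 subr0.
  have f0N : f`_0 \isn't a GRing.unit by case: f_ord => _; apply; lia.
  have := irreducible_coef0_neq0 (s_irr f f_in) f_deg ltac:(lia).
  by case: (nonunit_0c f0N) => ->; rewrite ?eqxx.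
have := congr1 (fun p => p`_(n - M)) Xn_prod => /=.
rewrite (eq_bigr _ (fun f _ => urestE f)) prod_unit_monomial_add // s_sum.
rewrite coefD coefCM coef_sum !coefXn ltn_eqF; last lia.
rewrite mulr0 add0r big_seq (eq_bigr _ coef_term) -big_seq -big_mkcond big_const_seq iter_addr_0.
have c_mulrn k : c *+ k = c *+ odd k.
  by rewrite -{1}(odd_double_half k) mulrnDr -mul2n mulrnA mulr2n add_self_eq0 mul0rn addr0.
by move=> /esym; rewrite c_mulrn; case: odd => //= /eqP; rewrite mulr1n (negPf c_neq0).
Qed.

Lemma Xn_no_length n : (6 <= n)%N -> ~ is_length ('X^n : {poly R}) (n - 3).
Proof.
move=> n_ge6 [_ [s [s_size [s_irr Xn_prod]]]].
have [s_mono s_sum] := Xn_factors_monomial Xn_prod.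
have s_pos : {in s, forall f, 0 < udeg f}%N.
  by move=> f f_in; exact: irreducible_udeg_gt0 (s_irr f f_in) (s_mono f f_in).1.
have [|M [M_bounds s_leM M_odd]] := sum_excess3_bigmax s_pos.
  by rewrite s_sum s_size; lia.
rewrite s_sum in M_bounds.
by have := count_udeg_even Xn_prod s_irr M_bounds s_leM; rewrite M_odd.
Qed.

End FourElementRing.

End SquareZero.

End LocalRing.
End UnitCoefficients.

Unset Implicit Arguments.

Theorem proposition4p11 (R : comUnitRingType)
  (hart : artinian R) (hloc : local_ring R)
  (hm0 : exists x : R, x \isn't a GRing.unit /\ x != 0)
  (hm2 : forall x y : R, x \isn't a GRing.unit -> y \isn't a GRing.unit -> x * y = 0)
  (n : nat) (hn : (6 <= n)%N) :
  (exists s : seq R, uniq s /\ (4 < size s)%N) <-> is_length ('X^n : {poly R}) (n - 3).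
Proof.
have [c [c_nonunit c_neq0]] := hm0.
have [[x [x_nonunit x_neq0 x_neq_c]] | nonunit_0c] :
    (exists x : R, [/\ x \isn't a GRing.unit, x != 0 & x != c]) \/
    (forall x : R, x \isn't a GRing.unit -> x = 0 \/ x = c).
  apply: NNPP => /not_or_and[no_x]; apply=> x x_nonunit.
  by apply: NNPP => /not_or_and[/eqP x_neq0 /eqP x_neq_c]; apply: no_x; exists x.
- split=> _; last by exists [:: 0; c; x; 1; 1 + c]; rewrite uniq_two_nonunits.
  exact: (Xn_length_of_two_nonunits hloc hm2 c_nonunit x_nonunit c_neq0 x_neq0 x_neq_c hn).
- split=> [[s [s_uniq s_size]] | /(Xn_no_length hloc hm2 c_nonunit c_neq0 nonunit_0c hn) //].
  by have := uniq_size_le4 c_nonunit c_neq0 nonunit_0c s_uniq; lia.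
Qed.
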